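(* Under the setting and Assumption 1 described in the context, in the limit $M\gg 1$ (leading order as $M\to\infty$ with $L$, $C$, $T$ and all $\alpha_l$ fixed), the arithmetic mean $m_\lambda:=\frac1P\sum_{i=1}^P\lambda_i$ of the eigenvalues $\lambda_1,\dots,\lambda_P$ of the empirical FIM $F$ satisfies $$ m_\lambda = C\,\frac{\kappa_1}{M},\qquad \kappa_1:=\sum_{l=1}^{L}\frac{\alpha_{l-1}}{\alpha}\,\tilde q^{\,l}\,\hat q^{\,l-1},\qquad \alpha:=\sum_{l=1}^{L-1}\alpha_l\alpha_{l-1}. $$ In particular $m_\lambda=O(1/M)$, since $\kappa_1$ does not depend on $M$.
   Context: Network: a fully connected feedforward network with $L\ge 2$ layers of weights. Layer widths are $M_l=\alpha_l M$ for $l=0,1,\dots,L-1$ (layer $0$ is the input, with $M_0$ units), where the $\alpha_l>0$ are fixed constants and $M$ is a large parameter. The output layer has $M_L=C$ units, with $C$ a fixed constant. Forward pass: $h^0_i=x_i$; for $l=1,\dots,L$, $u^l_i=\sum_{j=1}^{M_{l-1}}W^l_{ij}h^{l-1}_j+b^l_i$; for $l\le L-1$, $h^l_i=\phi(u^l_i)$; the output is linear, $f_{\theta,k}(x)=u^L_k$ for $k=1,\dots,C$. The activation $\phi$ and its derivative $\phi'$ are square integrable with respect to the standard Gaussian measure. The parameter vector $\theta=\{W^l_{ij},b^l_i\}$ has total dimension $P$; to leading order $P=\alpha M^2$ with $\alpha:=\sum_{l=1}^{L-1}\alpha_l\alpha_{l-1}$. Random parameters: the entries are independent with $W^l_{ij}\sim\mathcal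 N(0,\sigma_w^2/M_{l-1})$ and $b^l_i\sim\mathcal N(0,\sigma_b^2)$, where $\sigma_w>0$ and $\sigma_b>0$; the parameters are then held fixed. Inputs: $T$ samples $x(t)\in\mathbb R^{M_0}$, $t=1,\dots,T$, with i.i.d. standard Gaussian entries. Empirical FIM: $F=\frac1T\sum_{t=1}^T\sum_{k=1}^C\nabla_\theta f_{\theta,k}(x(t))\,\nabla_\theta f_{\theta,k}(x(t))^{\top}$. This is a $P\times P$ positive semidefinite matrix with eigenvalues $\lambda_1,\dots,\lambda_P\ge 0$. Backpropagated signals: $\delta^l_{k,i}:=\partial f_{\theta,k}/\partial u^l_i$. These satisfy $\delta^L_{k,i}=1$ if $i=k$ and $0$ otherwise, and $\delta^l_{k,i}=\phi'(u^l_i)\sum_j\delta^{l+1}_{k,j}W^{l+1}_{ji}$. The weight gradients are $\partial f_{\theta,k}/\partial W^l_{ij}=\delta^l_{k,i}h^{l-1}_j$. Macroscopic variables: let $Du$ denote the standard Gaussian measure. For $a>0$, $|b|\le a$ and $c=b/a$, define $$I_\psi[a,b]=\int Dz_1Dz_2\,\psi(\sqrt a z_1)\,\psi\big(\sqrt a(cz_1+\sqrt{1-c^2}z_2)\big).$$ Set $\hat q^0=1$ and $\hat q^0_{st}=0$. For $l=0,\dots,L-1$: - $q^{l+1}=\sigma_w^2\hat q^l+\sigma_b^2$ and $\hat q^{l+1}=\int Du\,\phi^2(\sqrt{q^{l+1}}u)$; - $q^{l+1}_{st}=\sigma_w^2\hat q^l_{st}+\sigma_b^2$ and $\hat q^{l+1}_{st}=I_\phi[q^{l+1},q^{l+1}_{st}]$.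 Backward variables: set $\tilde q^L=\tilde q^L_{st}=1$. For $l=L-1,\dots,1$: - $\tilde q^l=\sigma_w^2\tilde q^{l+1}\int Du\,[\phi'(\sqrt{q^l}u)]^2$; - $\tilde q^l_{st}=\sigma_w^2\tilde q^{l+1}_{st}\,I_{\phi'}[q^l,q^l_{st}]$. In the large-$M$ limit, these describe $\frac1{M_l}\sum_i h^l_i(t)^2\to\hat q^l$, $\frac1{M_l}\sum_ih^l_i(s)h^l_i(t)\to\hat q^l_{st}$ ($s\ne t$), $\sum_i\delta^l_{k,i}(t)^2\to\tilde q^l$ and $\sum_i\delta^l_{k,i}(s)\delta^l_{k,i}(t)\to\tilde q^l_{st}$ ($s\ne t$). Assumption 1 (gradient independence): when evaluating the backpropagated quantities $\tilde q^l$ and $\tilde q^l_{st}$, the parameters in the backward chain may be treated as an independent copy of those in the forward chain. Consequently, the backward recurrences above hold. *)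

From HB Require Import structures.
From mathcomp Require Import all_boot all_order all_algebra.
From mathcomp Require Import all_classical all_reals all_analysis.
Set Implicit Arguments. Unset Strict Implicit. Unset Printing Implicit Defensive.
Import Order.TTheory GRing.Theory Num.Theory.
Import numFieldNormedType.Exports.
Local Open Scope classical_set_scope.
Local Open Scope ring_scope.

Definition gauss_int {R : realType} (g : R -> R) : R :=
  \int[@lebesgue_measure R]_(u in setT) (g u * normal_pdf 0 1 u).

Definition gauss_sq_integrable {R : realType} (g : R -> R) : Prop :=
  measurable_fun setT g /\
  (@lebesgue_measure R).-integrable setT (fun u => (g u ^+ 2 * normal_pdf 0 1 u)%:E).

(** Layers are numbered 0..L; width l = M_l (width 0 = M_0 input, width L = C).
   W l i j = W^l_{ij} (l = 1..L, i < width l, j < width (l-1)), b l i = b^l_i,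
   x t j = x_j(t).  Indices out of range are simply never used. *)
Section Network.
Variables (R : realType) (L : nat) (width : nat -> nat) (phi dphi : R -> R)
  (W : nat -> nat -> nat -> R) (b : nat -> nat -> R) (x : nat -> nat -> R).

Fixpoint hid (t : nat) (l : nat) : nat -> R :=
  match l with
  | 0 => x t
  | l'.+1 => fun i => phi (\sum_(j < width l') W l'.+1 i j * hid t l' j + b l'.+1 i)
  end.

Definition pre (t l i : nat) : R :=
  \sum_(j < width l.-1) W l i j * hid t l.-1 j + b l i.

(* backpropagated signals, indexed by the distance j = L - l from the output:
   delta^L_{k,i} = [i = k],
   delta^l_{k,i} = phi'(u^l_i) sum_m delta^{l+1}_{k,m} W^{l+1}_{m i}. *)
Fixpoint dback (t k : nat) (j : nat) : nat -> R :=
  match j with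
  | 0 => fun i => if i == k then 1 else 0
  | j'.+1 => fun i => dphi (pre t (L - j'.+1) i) *
        \sum_(m < width (L - j')) dback t k j' m * W (L - j') m i
  end.

Definition delta (t k l : nat) : nat -> R := dback t k (L - l).

(* parameter index set: for layer l+1 (l : 'I_L), either a weight (i,j) or a bias i *)
Definition pidx : finType :=
  {l : 'I_L & ('I_(width l.+1) * 'I_(width l) + 'I_(width l.+1))%type}.

Definition nparams : nat := #|pidx|.

(* gradient of f_k(x(t)) w.r.t. the parameter p *)
Definition grad (t k : nat) (p : pidx) : R :=
  match tagged p with
  | inl ij => delta t k (tag p).+1 ij.1 * hid t (tag p) ij.2
  | inr i => delta t k (tag p).+1 i
  end.

Definition FIM (T : nat) : 'M[R]_nparams :=
  \matrix_(a < nparams, c < nparams)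
    (T%:R^-1 * \sum_(t < T) \sum_(k < width L)
        grad t k (enum_val a) * grad t k (enum_val c)).

End Network.

Section Macro.
Variables (R : realType) (L : nat) (sw sb : R) (phi dphi : R -> R).

Fixpoint qhat (l : nat) : R :=
  match l with
  | 0 => 1
  | l'.+1 => gauss_int (fun u => phi (Num.sqrt (sw ^+ 2 * qhat l' + sb ^+ 2) * u) ^+ 2)
  end.

Definition qpre (l : nat) : R := sw ^+ 2 * qhat l.-1 + sb ^+ 2.

(* tilde q, indexed by distance j = L - l from the output *)
Fixpoint qtback (j : nat) : R :=
  match j with
  | 0 => 1
  | j'.+1 => sw ^+ 2 * qtback j' *
      gauss_int (fun u => dphi (Num.sqrt (qpre (L - j'.+1)) * u) ^+ 2)
  end.

Definition qtilde (l : nat) : R := qtback (L - l).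

Definition alpha_sum (alpha : nat -> R) : R :=
  \sum_(1 <= l < L) alpha l * alpha l.-1.

Definition kappa1 (alpha : nat -> R) : R :=
  \sum_(1 <= l < L.+1) alpha l.-1 / alpha_sum alpha * qtilde l * qhat l.-1.

End Macro.

From HB Require Import structures.
From mathcomp Require Import all_boot all_order all_algebra.
From mathcomp Require Import all_classical all_reals all_analysis.
From mathcomp.algebra_tactics Require Import ring.
Import Order.TTheory GRing.Theory Num.Theory.
Import numFieldNormedType.Exports.
Local Open Scope classical_set_scope.
Local Open Scope ring_scope.

(* The mean eigenvalue is tr F / P.  Since the gradient of f_k with respect to
   W^l_{ij} is delta^l_{k,i} h^{l-1}_j, the trace factorises layer by layer into
   (sum_i delta_i^2) (sum_j h_j^2 + 1), which is O(M), while P = alpha M^2 + O(M).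
   Hence M tr F / P tends to the ratio of the two leading coefficients; the
   top layer does not contribute to P / M^2 because M_L = C stays bounded. *)

Lemma sum_roots_char_poly {R : comNzRingType} {n} {A : 'M[R]_n} {s : seq R} :
  char_poly A = \prod_(z <- s) ('X - z%:P) -> \sum_(z <- s) z = \tr A.
Proof.
move=> charA.
have size_s : size s = n.
  by have := size_char_poly A; rewrite charA size_prod_XsubC => -[].
case: n A charA size_s => [|n] A charA size_s.
  by case: s charA size_s => // _ _; rewrite big_nil /mxtrace big_ord0.
apply: oppr_inj; rewrite -coefPn_prod_XsubC ?size_s // -charA.
exact: char_poly_trace.
Qed.

Lemma cvgr_sum (R : numFieldType) (T : Type) (F : set_system T) (I : Type)
    (r : seq I) (P : pred I) (f : I -> T -> R) (a : I -> R) :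
  Filter F -> (forall i, P i -> f i x @[x --> F] --> a i) ->
  \sum_(i <- r | P i) f i x @[x --> F] --> \sum_(i <- r | P i) a i.
Proof. by move=> FF; apply: cvg_big => //; exact: add_continuous. Qed.

Lemma cvgr_inv0 (R : realType) (u : nat -> R) :
  u n @[n --> \oo] --> +oo -> (u n)^-1 @[n --> \oo] --> 0.
Proof.
move=> u_oo; apply/(gtr0_cvgV0 (f := u)) => //.
by move/cvgryPgt: u_oo; apply.
Qed.

(* Also valid for [a = 0], where the empty sum makes the junk [0^-1] harmless. *)
Lemma sumr_ord_div_factor (R : numFieldType) (a : nat) (f : 'I_a -> R) (m : R) :
  (\sum_(i < a) f i) / m = a%:R / m * (a%:R^-1 * \sum_(i < a) f i).
Proof.
case: a f => [|a] f; first by rewrite big_ord0 !mul0r.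
by rewrite [_ / m]mulrC -mulrA mulVKf ?pnatr_eq0 // mulrC.
Qed.

Lemma mulr_div_rescale (R : fieldType) (s m p : R) :
  m != 0 -> m * (s / p) = s / m / (p / m ^+ 2).
Proof.
move=> m0; have [->|p0] := eqVneq p 0; first by rewrite !(mul0r, invr0, mulr0).
by field; rewrite m0 p0.
Qed.

Lemma alpha_sum_gt0 (R : realType) (L : nat) (alpha : nat -> R) :
  (2 <= L)%N -> (forall l, (l < L)%N -> 0 < alpha l) -> 0 < alpha_sum L alpha.
Proof.
case: L => [|[|L]] // _ alpha_gt0.
rewrite /alpha_sum big_ltn //= ltr_pwDl ?mulr_gt0 ?alpha_gt0 //.
rewrite big_nat_cond; apply: sumr_ge0 => l /andP[/andP[l2 lL] _].
by rewrite mulr_ge0 // ltW // alpha_gt0 // ltnW // (leq_trans _ lL) // prednK // ltnW.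
Qed.

Section FIM_trace.
Variables (R : realType) (L : nat) (w : nat -> nat) (phi dphi : R -> R)
  (W : nat -> nat -> nat -> R) (b : nat -> nat -> R) (x : nat -> nat -> R).

Local Notation grad := (@grad R L w phi dphi W b x).
Local Notation delta := (delta L w phi dphi W b x).
Local Notation hid := (hid w phi W b x).

Lemma sum_grad_sqr t k :
  \sum_(p : pidx L w) grad t k p ^+ 2 =
  \sum_(l < L) (\sum_(i < w l.+1) delta t k l.+1 i ^+ 2) *
               (\sum_(j < w l) hid t l j ^+ 2 + 1).
Proof.
pose J (l : 'I_L) := ('I_(w l.+1) * 'I_(w l) + 'I_(w l.+1))%type.
transitivity (\sum_(p : pidx L w | true && true) grad t k (Tagged J (tagged p)) ^+ 2).
  by apply: eq_bigr => -[].
rewrite -(@sig_big_dep R 0 +%R 'I_L J (fun _ => true) (fun _ _ => true)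
  (fun l q => grad t k (Tagged J q) ^+ 2)) /=.
apply: eq_bigr => l _; rewrite big_sumType /= mulrDr mulr1; congr (_ + _).
rewrite big_distrlr pair_bigA /=.
by apply: eq_bigr => -[i j] _; rewrite /grad /= exprMn.
Qed.

Lemma mxtrace_FIM T :
  \tr (FIM L w phi dphi W b x T) = T%:R^-1 * \sum_(t < T) \sum_(k < w L)
    \sum_(l < L) (\sum_(i < w l.+1) delta t k l.+1 i ^+ 2) *
                 (\sum_(j < w l) hid t l j ^+ 2 + 1).
Proof.
rewrite /mxtrace; under eq_bigr do rewrite mxE.
rewrite -mulr_sumr exchange_big /=; congr (_ * _); apply: eq_bigr => t _.
rewrite exchange_big /=; apply: eq_bigr => k _.
rewrite -sum_grad_sqr /nparams -(big_enum_val (fun p => grad t k p ^+ 2)).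
by apply: eq_bigr => p _; rewrite expr2.
Qed.

Lemma natr_nparams :
  (nparams L w)%:R = \sum_(l < L) ((w l.+1)%:R * (w l)%:R + (w l.+1)%:R : R).
Proof.
rewrite /nparams /pidx card_tagged sumnE big_map big_enum /= natr_sum.
by apply: eq_bigr => l _; rewrite card_sum card_prod !card_ord natrD natrM.
Qed.

End FIM_trace.

Lemma kappa1E (R : realType) (L : nat) (sw sb : R) (phi dphi : R -> R)
    (alpha : nat -> R) :
  kappa1 L sw sb phi dphi alpha =
  (\sum_(l < L) qtilde L sw sb phi dphi l.+1 * (alpha l * qhat sw sb phi l))
    / alpha_sum L alpha.
Proof.
rewrite /kappa1 big_add1 big_mkord mulr_suml.
by apply: eq_bigr => l _ /=; ring.
Qed.

Section asymptotics.
Variables (R : realType) (L C T : nat) (alpha : nat -> R) (sw sb : R)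
  (phi dphi : R -> R) (width : nat -> nat -> nat) (Mn : nat -> nat)
  (W : nat -> nat -> nat -> nat -> R) (b : nat -> nat -> nat -> R)
  (x : nat -> nat -> nat -> R).

Hypothesis widthL : forall n, width n L = C.
Hypothesis Mn_oo : ((Mn n)%:R : R) @[n --> \oo] --> +oo.
Hypothesis width_ratio : forall l, (l < L)%N ->
  ((width n l)%:R / (Mn n)%:R : R) @[n --> \oo] --> alpha l.

Let alpha_ext l := if (l < L)%N then alpha l else 0.

Lemma cvg_width_ratio l : (l <= L)%N ->
  ((width n l)%:R / (Mn n)%:R : R) @[n --> \oo] --> alpha_ext l.
Proof.
rewrite leq_eqVlt => /orP[/eqP ->|lL]; last by rewrite /alpha_ext lL; exact: width_ratio.
rewrite /alpha_ext ltnn -(mulr0 C%:R).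
under eq_cvg do rewrite widthL.
by apply: cvgMl_tmp; exact: cvgr_inv0.
Qed.

Lemma alpha_sumE : (0 < L)%N ->
  alpha_sum L alpha = \sum_(l < L) alpha_ext l.+1 * alpha l.
Proof.
move=> L0; have [L' L_eq] : exists L', L = L'.+1 by exists L.-1; rewrite prednK.
rewrite /alpha_sum /alpha_ext L_eq big_ord_recr /= ltnn mul0r addr0 big_add1.
by rewrite big_mkord; apply: eq_bigr => l _; rewrite ltnS ltn_ord.
Qed.

Lemma cvg_nparams_ratio : (0 < L)%N ->
  ((nparams L (width n))%:R / (Mn n)%:R ^+ 2 : R) @[n --> \oo] -->
  alpha_sum L alpha.
Proof.
move=> L0; rewrite alpha_sumE //.
have layer_ratio n : (nparams L (width n))%:R / (Mn n)%:R ^+ 2 =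
    \sum_(l < L) ((width n l.+1)%:R / (Mn n)%:R * ((width n l)%:R / (Mn n)%:R)
                  + (width n l.+1)%:R / (Mn n)%:R * (Mn n)%:R^-1) :> R.
  rewrite natr_nparams mulr_suml; apply: eq_bigr => l _.
  by rewrite mulrDl expr2 invfM; congr (_ + _); [rewrite mulrACA | rewrite mulrA].
under eq_cvg do rewrite layer_ratio.
under eq_bigr => l _ do rewrite -[_ * alpha _]addr0 -(mulr0 (alpha_ext l.+1)).
apply: cvgr_sum => l _.
have lL : (l < L)%N := ltn_ord l.
have ratio_next := @cvg_width_ratio l.+1 lL.
by apply: cvgD; apply: cvgM => //; [exact: width_ratio | exact: cvgr_inv0].
Qed.

Hypothesis hid_sqr_lim : forall t l, (t < T)%N -> (l < L)%N ->
  ((width n l)%:R^-1 *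
     \sum_(i < width n l) hid (width n) phi (W n) (b n) (x n) t l i ^+ 2)
    @[n --> \oo] --> qhat sw sb phi l.
Hypothesis delta_sqr_lim : forall t k l, (t < T)%N -> (k < C)%N -> (1 <= l <= L)%N ->
  (\sum_(i < width n l) delta L (width n) phi dphi (W n) (b n) (x n) t k l i ^+ 2)
    @[n --> \oo] --> qtilde L sw sb phi dphi l.

Lemma cvg_mxtrace_FIM_ratio :
  (\tr (FIM L (width n) phi dphi (W n) (b n) (x n) T) / (Mn n)%:R)
    @[n --> \oo] -->
  T%:R^-1 * \sum_(t < T) \sum_(k < C) \sum_(l < L)
    qtilde L sw sb phi dphi l.+1 * (alpha l * qhat sw sb phi l).
Proof.
pose M n : R := (Mn n)%:R.
have trace_ratio n : \tr (FIM L (width n) phi dphi (W n) (b n) (x n) T) / M n =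
    T%:R^-1 * \sum_(t < T) \sum_(k < C) \sum_(l < L)
      (\sum_(i < width n l.+1)
          delta L (width n) phi dphi (W n) (b n) (x n) t k l.+1 i ^+ 2) *
      ((width n l)%:R / M n * ((width n l)%:R^-1 *
          \sum_(j < width n l) hid (width n) phi (W n) (b n) (x n) t l j ^+ 2)
       + (M n)^-1).
  rewrite mxtrace_FIM widthL -mulrA; congr (_ * _).
  rewrite mulr_suml; apply: eq_bigr => t _; rewrite mulr_suml.
  apply: eq_bigr => k _; rewrite mulr_suml; apply: eq_bigr => l _.
  by rewrite -mulrA mulrDl mul1r sumr_ord_div_factor.
under eq_cvg do rewrite trace_ratio.
apply: cvgMl_tmp; apply: cvgr_sum => t _; apply: cvgr_sum => k _.
apply: cvgr_sum => l _.
rewrite -[_ * qhat _ _ _ _]addr0.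
apply: cvgM; first by apply: delta_sqr_lim; rewrite ?ltn_ord.
by apply: cvgD; [apply: cvgM; [apply: width_ratio | apply: hid_sqr_lim] | apply: cvgr_inv0].
Qed.

End asymptotics.

Theorem theorem1 (R : realType) (L C T : nat) (alpha : nat -> R) (sw sb : R)
  (phi dphi : R -> R)
  (width : nat -> nat -> nat) (Mn : nat -> nat)
  (W : nat -> nat -> nat -> nat -> R) (b : nat -> nat -> nat -> R)
  (x : nat -> nat -> nat -> R) (lam : nat -> seq R) :
  (2 <= L)%N -> (0 < C)%N -> (0 < T)%N ->
  (forall l, (l < L)%N -> 0 < alpha l) -> 0 < sw -> 0 < sb ->
  gauss_sq_integrable phi -> gauss_sq_integrable dphi ->
  {ae @lebesgue_measure R, forall u : R, is_derive u (1 : R) phi (dphi u)} ->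
  (forall n, width n L = C) ->
  ((Mn n)%:R : R) @[n --> \oo] --> +oo ->
  (forall l, (l < L)%N ->
     ((width n l)%:R / (Mn n)%:R : R) @[n --> \oo] --> alpha l) ->
  (* macroscopic limits of the forward signals *)
  (forall t l, (t < T)%N -> (l < L)%N ->
     ((width n l)%:R^-1 *
        \sum_(i < width n l) hid (width n) phi (W n) (b n) (x n) t l i ^+ 2)
       @[n --> \oo] --> qhat sw sb phi l) ->
  (* macroscopic limits of the backpropagated signals (Assumption 1) *)
  (forall t k l, (t < T)%N -> (k < C)%N -> (1 <= l <= L)%N ->
     (\sum_(i < width n l)
        delta L (width n) phi dphi (W n) (b n) (x n) t k l i ^+ 2)
       @[n --> \oo] --> qtilde L sw sb phi dphi l) ->
  (* lam n : the eigenvalues (with multiplicity) of the empirical FIM *)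
  (forall n, char_poly (FIM L (width n) phi dphi (W n) (b n) (x n) T)
               = \prod_(z <- lam n) ('X - z%:P)) ->
  ((Mn n)%:R * ((\sum_(z <- lam n) z) / (nparams L (width n))%:R))
    @[n --> \oo] --> C%:R * kappa1 L sw sb phi dphi alpha.
Proof.
move=> L2 _ T0 alpha_gt0 _ _ _ _ _ widthL Mn_oo width_ratio hid_lim delta_lim
  char_FIM.
pose X := \sum_(l < L) qtilde L sw sb phi dphi l.+1 * (alpha l * qhat sw sb phi l).
have limitE : C%:R * kappa1 L sw sb phi dphi alpha =
    T%:R^-1 * (\sum_(t < T) \sum_(k < C) X) / alpha_sum L alpha.
  rewrite kappa1E -/X !sumr_const !card_ord -[X *+ C]mulr_natl -[(_ * X) *+ T]mulr_natl.
  by rewrite mulKf ?pnatr_eq0 -?lt0n // mulrA.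
have rescale : \forall n \near \oo,
    \tr (FIM L (width n) phi dphi (W n) (b n) (x n) T) / (Mn n)%:R
      / ((nparams L (width n))%:R / (Mn n)%:R ^+ 2)
    = (Mn n)%:R * ((\sum_(z <- lam n) z) / (nparams L (width n))%:R).
  near=> n; rewrite (sum_roots_char_poly (char_FIM n)) -mulr_div_rescale //.
  by apply: lt0r_neq0; near: n; move/cvgryPgt: Mn_oo; apply.
apply: cvg_trans (near_eq_cvg rescale) _; rewrite limitE.
apply: cvgM; first exact: cvg_mxtrace_FIM_ratio.
apply: cvgV; first exact/lt0r_neq0/alpha_sum_gt0.
by apply: cvg_nparams_ratio => //; exact: ltnW.
Unshelve. all: by end_near. Qed.
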